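(* Let $E^*=\{\alpha\in\mathbb{Z}[\gamma]:\alpha>0\}$. The sets $$E^{(+)}=\{m+n\gamma^{-1}:\ m,n\in\mathbb{Z},\ m,n\ge1\},\qquad E^{(i)}=\{m\gamma^{-i}+n\gamma^{-i-2}:\ m,n\in\mathbb{Z},\ m\ge1,\ n\ge0\}\quad(i\in\mathbb{N})$$ are pairwise disjoint and their union is $E^*$.
   Context: $\gamma=(1+\sqrt5)/2$ and $\mathbb{Z}[\gamma]=\mathbb{Z}\oplus\mathbb{Z}\gamma^{-1}\subset\mathbb{R}$. *)

From Stdlib Require Import Reals ZArith.
Open Scope R_scope.

Definition gamma : R := (1 + sqrt 5) / 2.

(* Z[gamma] = Z + Z gamma^{-1} as a subset of R *)
Definition in_Zgamma (x : R) : Prop :=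
  exists m n : Z, x = IZR m + IZR n * / gamma.

Definition Estar (x : R) : Prop := in_Zgamma x /\ 0 < x.

Definition Eplus (x : R) : Prop :=
  exists m n : Z, (1 <= m)%Z /\ (1 <= n)%Z /\ x = IZR m + IZR n * / gamma.

Definition Ei (i : nat) (x : R) : Prop :=
  exists m n : Z, (1 <= m)%Z /\ (0 <= n)%Z /\
    x = IZR m * / gamma ^ i + IZR n * / gamma ^ (i + 2).

From Stdlib Require Import Reals ZArith Lra Lia.
Open Scope R_scope.

(* Write phi = 1/gamma, so that phi^2 = 1 - phi, and give every
   element of Z[gamma] its coordinates: zg a b = a + b phi.  The coordinates
   are unique (phi is irrational: a^2 - ab - b^2 = 0 forces a = b = 0 by a
   2-adic descent).  In coordinates
     E^(+) = {zg a b | a, b >= 1},   E^(0) = {zg a b | b <= 0, a + b >= 1},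
   and E^(i+1) = phi * E^(i).  Multiplication by gamma acts as
   zg a b |-> zg (a+b) a, hence maps E^(+) and E^(0) into E^(+);
   multiplication by phi maps E^(+) into E^(+) u E^(0).
   Disjointness: E^(+) and E^(0) differ in the sign of the second coordinate;
   multiplying by a power of gamma reduces every other pair to this one.
   Covering: for zg a b > 0 outside E^(+) u E^(0), the element gamma * x has
   coordinates of smaller total absolute value (or lies in E^(0)), so by
   strong induction it lies in the union, and so does x = phi * (gamma * x). *)

Local Notation phi := (/ gamma).

Local Notation zg a b := (IZR a + IZR b * / gamma).

Lemma gamma_gt_1 : 1 < gamma.
Proof.
  unfold gamma.
  pose proof (sqrt_sqrt 5 ltac:(lra)); pose proof (sqrt_pos 5); nra.
Qed.

Lemma gamma_sq : gamma * gamma = gamma + 1.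
Proof.
  unfold gamma. pose proof (sqrt_sqrt 5 ltac:(lra)). nra.
Qed.

Lemma phi_eq : phi = gamma - 1.
Proof.
  pose proof gamma_gt_1; pose proof gamma_sq.
  apply (Rmult_eq_reg_l gamma); [| lra].
  rewrite Rinv_r by lra. nra.
Qed.

Lemma phi_bounds : 0 < phi < 1.
Proof. rewrite phi_eq. pose proof gamma_gt_1; pose proof gamma_sq. nra. Qed.

Lemma phi_sq : phi * phi = 1 - phi.
Proof. rewrite phi_eq. pose proof gamma_sq. nra. Qed.

Lemma phi_gamma (x : R) : phi * (gamma * x) = x.
Proof.
  pose proof gamma_gt_1.
  rewrite <- Rmult_assoc, Rinv_l, Rmult_1_l by lra. reflexivity.
Qed.

Lemma gamma_phi (x : R) : gamma * (phi * x) = x.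
Proof.
  pose proof gamma_gt_1.
  rewrite <- Rmult_assoc, Rinv_r, Rmult_1_l by lra. reflexivity.
Qed.

Lemma gamma_zg (a b : Z) : gamma * zg a b = zg (a + b) a.
Proof.
  rewrite plus_IZR, phi_eq.
  transitivity (IZR a * gamma + IZR b * (gamma * gamma) - IZR b * gamma); [ring|].
  rewrite gamma_sq. ring.
Qed.

Lemma phi_zg (a b : Z) : phi * zg a b = zg b (a - b).
Proof.
  rewrite minus_IZR.
  transitivity (IZR a * phi + IZR b * (phi * phi)); [ring|].
  rewrite phi_sq. ring.
Qed.

(* The norm form a^2 - ab - b^2 of Z[gamma] has no nontrivial zero: it is odd
   unless a and b are both even, and then (a/2, b/2) is a smaller zero. *)
Lemma golden_norm_zero (a b : Z) :
  (a * a - a * b - b * b = 0)%Z -> a = 0%Z /\ b = 0%Z.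
Proof.
  remember (Z.abs a + Z.abs b)%Z as s eqn:Hs.
  assert (Hs0 : (0 <= s)%Z) by lia.
  revert a b Hs.
  pattern s; apply Z_lt_induction; [clear s Hs0 | exact Hs0].
  intros s IH a b Hs Hnorm.
  assert (Hodd : Z.odd (a * a - a * b - b * b) = (Z.odd a || Z.odd b)%bool).
  { rewrite !Z.odd_sub, !Z.odd_mul.
    destruct (Z.odd a), (Z.odd b); reflexivity. }
  rewrite Hnorm in Hodd.
  destruct (Z.Even_or_Odd a) as [[k ->] | [k ->]];
    [| rewrite Z.odd_odd in Hodd; discriminate].
  destruct (Z.Even_or_Odd b) as [[l ->] | [l ->]];
    [| rewrite Z.odd_odd, Bool.orb_true_r in Hodd; discriminate].
  assert (Hhalf : (k * k - k * l - l * l = 0)%Z) by lia.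
  enough (k = 0 /\ l = 0)%Z by lia.
  destruct (Z.eq_dec (Z.abs k + Z.abs l) 0); [lia|].
  apply (IH (Z.abs k + Z.abs l)%Z); [lia | reflexivity | exact Hhalf].
Qed.

(* A vanishing element a + b phi has a = -b phi, so its norm vanishes. *)
Lemma zg_eq_0 (a b : Z) : zg a b = 0 -> a = 0%Z /\ b = 0%Z.
Proof.
  intros H. apply golden_norm_zero, eq_IZR.
  assert (Ha : IZR a = - IZR b * phi) by lra.
  rewrite !minus_IZR, !mult_IZR, Ha.
  transitivity (IZR b * IZR b * (phi * phi + phi - 1)); [ring|].
  rewrite phi_sq. ring.
Qed.

Lemma zg_inj (a b c d : Z) : zg a b = zg c d -> a = c /\ b = d.
Proof.
  intros H. destruct (zg_eq_0 (a - c) (b - d)) as [H1 H2]; [| lia].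
  rewrite !minus_IZR. lra.
Qed.

Lemma Ei0_coords (x : R) :
  Ei 0 x <-> exists a b : Z, (b <= 0)%Z /\ (1 <= a + b)%Z /\ x = zg a b.
Proof.
  assert (E : forall m n : Z,
    IZR m * / gamma ^ 0 + IZR n * / gamma ^ (0 + 2) = zg (m + n) (- n)).
  { intros m n. simpl.
    rewrite Rinv_1, !Rmult_1_r, Rinv_mult, phi_sq, plus_IZR, opp_IZR. ring. }
  split.
  - intros (m & n & Hm & Hn & ->). exists (m + n)%Z, (- n)%Z.
    rewrite E. repeat split; lia.
  - intros (a & b & Hb & Hab & ->). exists (a + b)%Z, (- b)%Z.
    rewrite E, Z.opp_involutive, <- Z.add_assoc, Z.add_opp_diag_r, Z.add_0_r.
    repeat split; lia.
Qed.

Lemma Ei_succ (i : nat) (x : R) : Ei (S i) x <-> Ei i (gamma * x).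
Proof.
  assert (E : forall m n : Z,
    IZR m * / gamma ^ S i + IZR n * / gamma ^ (S i + 2)
    = phi * (IZR m * / gamma ^ i + IZR n * / gamma ^ (i + 2))).
  { intros m n. simpl. rewrite !Rinv_mult. ring. }
  split.
  - intros (m & n & Hm & Hn & ->). exists m, n.
    rewrite E, gamma_phi. repeat split; assumption.
  - intros (m & n & Hm & Hn & Hx). exists m, n.
    rewrite E, <- Hx, phi_gamma. repeat split; assumption.
Qed.

Lemma Ei_gamma_pow (i : nat) (x : R) : Ei i x -> Ei 0 (gamma ^ i * x).
Proof.
  revert x; induction i as [| i IH]; intros x Hx.
  - simpl. rewrite Rmult_1_l. exact Hx.
  - apply Ei_succ, IH in Hx.
    replace (gamma ^ S i * x) with (gamma ^ i * (gamma * x)) by (simpl; ring).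
    exact Hx.
Qed.

Lemma gamma_into_Eplus (x : R) : Eplus x \/ Ei 0 x -> Eplus (gamma * x).
Proof.
  intros [(a & b & Ha & Hb & ->) | Hx].
  - exists (a + b)%Z, a. rewrite gamma_zg. repeat split; lia.
  - apply Ei0_coords in Hx as (a & b & Hb & Hab & ->).
    exists (a + b)%Z, a. rewrite gamma_zg. repeat split; lia.
Qed.

Lemma Eplus_gamma_pow (k : nat) (x : R) : Eplus x -> Eplus (gamma ^ k * x).
Proof.
  revert x; induction k as [| k IH]; intros x Hx.
  - simpl. rewrite Rmult_1_l. exact Hx.
  - replace (gamma ^ S k * x) with (gamma * (gamma ^ k * x)) by (simpl; ring).
    apply gamma_into_Eplus. left. exact (IH x Hx).
Qed.

(* The base case of disjointness: the second coordinate is >= 1 on E^(+)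
   and <= 0 on E^(0). *)
Lemma Eplus_Ei0_disjoint (x : R) : ~ (Eplus x /\ Ei 0 x).
Proof.
  intros [(a & b & Ha & Hb & Hx) H0].
  apply Ei0_coords in H0 as (c & d & Hd & Hcd & Hy).
  rewrite Hx in Hy. apply zg_inj in Hy. lia.
Qed.

(* For i < j, gamma^j x lies in E^(0) if x is in E^(j), and in E^(+) if x is
   in E^(i), since gamma^j x = gamma^(j-i-1) (gamma (gamma^i x)). *)
Lemma Ei_disjoint_lt (i j : nat) (x : R) : (i < j)%nat -> ~ (Ei i x /\ Ei j x).
Proof.
  intros Hij [Hi Hj].
  apply (Eplus_Ei0_disjoint (gamma ^ j * x)). split; [| exact (Ei_gamma_pow j x Hj)].
  replace (gamma ^ j * x) with (gamma ^ (j - S i) * (gamma * (gamma ^ i * x))).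
  - apply Eplus_gamma_pow, gamma_into_Eplus. right. exact (Ei_gamma_pow i x Hi).
  - replace j with (j - S i + S i)%nat at 2 by lia.
    rewrite pow_add. simpl. ring.
Qed.

Lemma Eplus_Estar (x : R) : Eplus x -> Estar x.
Proof.
  intros (a & b & Ha & Hb & ->). split; [exists a, b; reflexivity|].
  apply IZR_le in Ha, Hb. pose proof phi_bounds. nra.
Qed.

Lemma Estar_phi (x : R) : Estar x -> Estar (phi * x).
Proof.
  intros [(a & b & ->) Hx]. split.
  - exists b, (a - b)%Z. apply phi_zg.
  - pose proof phi_bounds. nra.
Qed.

Lemma Ei_Estar (i : nat) (x : R) : Ei i x -> Estar x.
Proof.
  revert x; induction i as [| i IH]; intros x Hx.
  - apply Ei0_coords in Hx as (a & b & Hb & Hab & ->).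
    split; [exists a, b; reflexivity|].
    apply IZR_le in Hb, Hab. rewrite plus_IZR in Hab.
    pose proof phi_bounds. nra.
  - apply Ei_succ, IH, Estar_phi in Hx. rewrite phi_gamma in Hx. exact Hx.
Qed.

Definition Eunion (x : R) : Prop := Eplus x \/ exists i : nat, Ei i x.

Lemma Eunion_phi (y : R) : Eunion y -> Eunion (phi * y).
Proof.
  intros [(a & b & Ha & Hb & ->) | [i Hi]].
  - rewrite phi_zg. destruct (Z_lt_le_dec b a) as [Hba | Hab].
    + left. exists b, (a - b)%Z. repeat split; lia.
    + right. exists 0%nat. apply Ei0_coords. exists b, (a - b)%Z.
      repeat split; lia.
  - right. exists (S i). apply Ei_succ. rewrite gamma_phi. exact Hi.
Qed.

Lemma zg_pos_coords (a b : Z) :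
  0 < zg a b -> (0 < a /\ b <= 0)%Z \/ (0 < b /\ 0 < a + b)%Z.
Proof.
  intros Hx. pose proof phi_bounds.
  destruct (Z_le_gt_dec b 0) as [Hb | Hb].
  - left. split; [| exact Hb]. apply lt_IZR. apply IZR_le in Hb. nra.
  - right. split; [lia|]. apply lt_IZR. rewrite plus_IZR.
    apply Z.gt_lt, IZR_lt in Hb. nra.
Qed.

Lemma Estar_Eunion (x : R) : Estar x -> Eunion x.
Proof.
  intros [(a & b & ->) Hx].
  remember (Z.abs a + Z.abs b)%Z as s eqn:Hs.
  assert (Hs0 : (0 <= s)%Z) by lia.
  revert a b Hs Hx.
  pattern s; apply Z_lt_induction; [clear s Hs0 | exact Hs0].
  intros s IH a b Hs Hx.
  (* Unless x lies in E^(+) or E^(0), it suffices to place gamma * x in the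
     union, because x = phi * (gamma * x). *)
  enough (Hgx : (1 <= a /\ 1 <= b)%Z \/ (b <= 0 /\ 1 <= a + b)%Z
                \/ Eunion (zg (a + b) a)).
  { destruct Hgx as [Hp | [H0 | Hgx]].
    - left. exists a, b. tauto.
    - right. exists 0%nat. apply Ei0_coords. exists a, b. tauto.
    - rewrite <- (phi_gamma (zg a b)), gamma_zg. apply Eunion_phi, Hgx. }
  assert (Hgpos : 0 < zg (a + b) a).
  { rewrite <- gamma_zg. pose proof gamma_gt_1. nra. }
  destruct (zg_pos_coords a b Hx) as [[Ha Hb] | [Hb Hab]].
  - destruct (Z_le_gt_dec 1 (a + b)); [right; left; lia|].
    right; right. apply (IH (Z.abs (a + b) + Z.abs a)%Z); [lia | reflexivity | exact Hgpos].
  - destruct (Z_le_gt_dec 1 a); [left; lia|].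
    right; right. destruct (Z.eq_dec a 0) as [-> | Ha].
    + right. exists 0%nat. apply Ei0_coords. exists b, 0%Z.
      rewrite Z.add_0_l. repeat split; lia.
    + apply (IH (Z.abs (a + b) + Z.abs a)%Z); [lia | reflexivity | exact Hgpos].
Qed.

Theorem mainTheorem12 :
  (forall (i : nat) (x : R), ~ (Eplus x /\ Ei i x)) /\
  (forall (i j : nat) (x : R), i <> j -> ~ (Ei i x /\ Ei j x)) /\
  (forall x : R, Estar x <-> (Eplus x \/ exists i : nat, Ei i x)).
Proof.
  split; [| split].
  - intros i x [Hp Hi].
    apply (Eplus_Ei0_disjoint (gamma ^ i * x)).
    split; [apply Eplus_gamma_pow, Hp | apply Ei_gamma_pow, Hi].
  - intros i j x Hij [Hi Hj].
    destruct (proj1 (Nat.lt_gt_cases i j) Hij) as [Hlt | Hgt].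
    + exact (Ei_disjoint_lt i j x Hlt (conj Hi Hj)).
    + exact (Ei_disjoint_lt j i x Hgt (conj Hj Hi)).
  - intros x. split.
    + apply Estar_Eunion.
    + intros [Hp | [i Hi]]; [apply Eplus_Estar, Hp | apply (Ei_Estar i), Hi].
Qed.
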